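(* Let $\mathcal{G}$ be the real Lie algebra with basis $X_1,X_2,X_3$ and brackets $[X_1,X_2]=X_3$, $[X_2,X_3]=X_1$, $[X_3,X_1]=X_2$ (Bianchi type $IX$). Every real Manin triple $(\mathcal{D},\mathcal{G}',\tilde{\mathcal{G}}')$ with $\mathcal{G}'\cong\mathcal{G}$ is isomorphic to exactly one Manin triple $(\mathcal{D},\mathcal{G},\tilde{\mathcal{G}})$ in which $\tilde{\mathcal{G}}$, written in the basis $\tilde X^1,\tilde X^2,\tilde X^3$ dual to $X_1,X_2,X_3$, has one of the following bracket structures: (a) (Bianchi $I$) $[\tilde X^1,\tilde X^2]=[\tilde X^2,\tilde X^3]=[\tilde X^3,\tilde X^1]=0$; (b) (Bianchi $V$) $[\tilde X^1,\tilde X^2]=-b\tilde X^2$, $[\tilde X^2,\tilde X^3]=0$, $[\tilde X^3,\tilde X^1]=b\tilde X^3$, for some $b>0$ (different $b$ giving non-isomorphic triples).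
   Context: A real Manin triple $(\mathcal{D},\mathcal{G},\tilde{\mathcal{G}})$ consists of a real Lie algebra $\mathcal{D}$ with a symmetric, ad-invariant, nondegenerate bilinear form $\langle\cdot,\cdot\rangle$, and two maximally isotropic Lie subalgebras $\mathcal{G},\tilde{\mathcal{G}}$ with $\mathcal{D}=\mathcal{G}\oplus\tilde{\mathcal{G}}$ as vector spaces; here $\dim\mathcal{D}=6$, $\dim\mathcal{G}=\dim\tilde{\mathcal{G}}=3$. Bases $X_i$ of $\mathcal{G}$ and $\tilde X^i$ of $\tilde{\mathcal{G}}$ are dual if $\langle X_i,X_j\rangle=0$, $\langle X_i,\tilde X^j\rangle=\delta_i^j$, $\langle\tilde X^i,\tilde X^j\rangle=0$. If $[X_i,X_j]=f_{ij}{}^kX_k$ and $[\tilde X^i,\tilde X^j]=\tilde f^{ij}{}_k\tilde X^k$, ad-invariance forces $[X_i,\tilde X^j]=f_{ki}{}^j\tilde X^k+\tilde f^{jk}{}_iX_k$, so the triple is determined by the brackets of $\mathcal{G}$ and $\tilde{\mathcal{G}}$ in dual bases (subject to the Jacobi identity of $\mathcal{D}$). Two Manin triples are isomorphic if there is a Lie algebra isomorphism of the doubles preserving the bilinear forms and mapping first subalgebra to first subalgebra and second to second; equivalently, they are related by a change of basis $X_i'=X_kA^k{}_i$, $\tilde X'^j=(A^{-1})^j{}_k\tilde X^k$. *)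

From HB Require Import structures.
From mathcomp Require Import all_boot all_order all_algebra.
From mathcomp Require Import reals.
Set Implicit Arguments. Unset Strict Implicit. Unset Printing Implicit Defensive.
Import Order.TTheory GRing.Theory Num.Theory.
Local Open Scope ring_scope.

Section Defs.
Variable R : realType.

(* Structure constants of a 3-dim algebra in a basis e_0,e_1,e_2:
   c i j k = c_{ij}^k, i.e.  [e_i, e_j] = \sum_k c i j k e_k. *)
Definition sc := 'I_3 -> 'I_3 -> 'I_3 -> R.

(* Vectors of the 6-dim double D = G (+) G~ written in the basis
   (X_1,X_2,X_3, X~^1,X~^2,X~^3): first component = coordinates on the X_i,
   second component = coordinates on the X~^i. *)
Definition Dv := (('I_3 -> R) * ('I_3 -> R))%type.

(* Bracket of D determined by f (brackets of G) and ft (brackets of G~):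
   [X_i,X_j] = f_{ij}^k X_k,  [X~^i,X~^j] = ft^{ij}_k X~^k,
   [X_i,X~^j] = f_{ki}^j X~^k + ft^{jk}_i X_k = - [X~^j, X_i],
   extended bilinearly. Here ft i j k = ft^{ij}_k. *)
Definition Dbr (f ft : sc) (x y : Dv) : Dv :=
  (fun k => \sum_(i < 3) \sum_(j < 3)
     (x.1 i * y.1 j * f i j k + x.1 i * y.2 j * ft j k i
      - x.2 j * y.1 i * ft j k i),
   fun k => \sum_(i < 3) \sum_(j < 3)
     (x.2 i * y.2 j * ft i j k + x.1 i * y.2 j * f k i j
      - x.2 j * y.1 i * f k i j)).

(* (f, ft) defines a Manin triple (D, G, G~) in dual bases: the bracket of D
   built from f and ft (with the mixed brackets forced by ad-invariance of the
   canonical pairing <X_i, X~^j> = delta_i^j) is a Lie bracket. *)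
Definition manin_triple (f ft : sc) : Prop :=
  (forall x y : Dv, forall k,
      (Dbr f ft x y).1 k = - (Dbr f ft y x).1 k /\
      (Dbr f ft x y).2 k = - (Dbr f ft y x).2 k) /\
  (forall x y z : Dv, forall k,
      (Dbr f ft x (Dbr f ft y z)).1 k + (Dbr f ft y (Dbr f ft z x)).1 k
        + (Dbr f ft z (Dbr f ft x y)).1 k = 0 /\
      (Dbr f ft x (Dbr f ft y z)).2 k + (Dbr f ft y (Dbr f ft z x)).2 k
        + (Dbr f ft z (Dbr f ft x y)).2 k = 0).

(* Lie algebra isomorphism G_f ~= G_g: an invertible linear map phi,
   phi(e_i) = \sum_k P k i e'_k, with phi [e_i,e_j] = [phi e_i, phi e_j]. *)
Definition lie_iso (f g : sc) : Prop :=
  exists P : 'M[R]_3, P \in unitmx /\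
    forall i j k, \sum_(c < 3) f i j c * P k c
                  = \sum_(a < 3) \sum_(b < 3) P a i * P b j * g a b k.

(* Structure constants after the change of basis X'_i = X_k A^k_i
   (A^k_i = A k i) and X~'^j = (A^{-1})^j_k X~^k. *)
Definition trans_f (f : sc) (A : 'M[R]_3) : sc := fun i j k =>
  \sum_(a < 3) \sum_(b < 3) \sum_(c < 3)
     A a i * A b j * f a b c * (invmx A) k c.
Definition trans_ft (ft : sc) (A : 'M[R]_3) : sc := fun i j k =>
  \sum_(a < 3) \sum_(b < 3) \sum_(c < 3)
     (invmx A) i a * (invmx A) j b * ft a b c * A c k.

Definition manin_iso (f ft g gt : sc) : Prop :=
  exists A : 'M[R]_3, A \in unitmx /\ g = trans_f f A /\ gt = trans_ft ft A.

Definition f_IX : sc := fun i j k =>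
  if [&& i == 0 :> nat, j == 1 :> nat & k == 2 :> nat] then 1
  else if [&& i == 1 :> nat, j == 2 :> nat & k == 0 :> nat] then 1
  else if [&& i == 2 :> nat, j == 0 :> nat & k == 1 :> nat] then 1
  else if [&& i == 1 :> nat, j == 0 :> nat & k == 2 :> nat] then -1
  else if [&& i == 2 :> nat, j == 1 :> nat & k == 0 :> nat] then -1
  else if [&& i == 0 :> nat, j == 2 :> nat & k == 1 :> nat] then -1
  else 0.

Definition ft_I : sc := fun _ _ _ => 0.

Definition ft_V (b : R) : sc := fun i j k =>
  if [&& i == 0 :> nat, j == 1 :> nat & k == 1 :> nat] then - b
  else if [&& i == 1 :> nat, j == 0 :> nat & k == 1 :> nat] then b
  else if [&& i == 2 :> nat, j == 0 :> nat & k == 2 :> nat] then b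
  else if [&& i == 0 :> nat, j == 2 :> nat & k == 2 :> nat] then - b
  else 0.

Definition IX_normal_form (gt : sc) : Prop :=
  gt = ft_I \/ exists b : R, 0 < b /\ gt = ft_V b.

End Defs.

From HB Require Import structures.
From mathcomp Require Import all_boot all_order all_algebra.
From mathcomp Require Import reals ring lra.
From Stdlib Require Import FunctionalExtensionality.
Set Implicit Arguments. Unset Strict Implicit. Unset Printing Implicit Defensive.
Import Order.TTheory GRing.Theory Num.Theory.
Local Open Scope ring_scope.

(* In a basis adapted to G, i.e. one in which the brackets of G are those of
   f_IX (the cross product), the mixed Jacobi identities of the double force
   [X~^i, X~^j] = v_j X~^i - v_i X~^j, where 2 v_j = sum_i ft^{ij}_i is the
   trace vector of the dual algebra.  Two adapted bases differ by an
   automorphism of so(3), which is an orthogonal matrix, and the trace vector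
   transforms by it; so the length of the trace vector is an invariant, equal
   to 0 for Bianchi I and to 2b for Bianchi V(b), which gives uniqueness.  For
   existence, a rotation of so(3) (built from a quaternion) turns the trace
   vector onto the positive first axis. *)

Definition i0 : 'I_3 := @Ordinal 3 0 isT.
Definition i1 : 'I_3 := @Ordinal 3 1 isT.
Definition i2 : 'I_3 := @Ordinal 3 2 isT.

Lemma sum3E (V : nmodType) (F : 'I_3 -> V) : \sum_(i < 3) F i = F i0 + F i1 + F i2.
Proof.
rewrite !big_ord_recr big_ord0 /= add0r.
by congr (F _ + F _ + F _); apply: val_inj.
Qed.

Lemma ord3_ind (P : 'I_3 -> Prop) : P i0 -> P i1 -> P i2 -> forall i, P i.
Proof.
move=> P0 P1 P2 [[|[|[|m]]] lt_m3] //.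
- by rewrite (_ : Ordinal lt_m3 = i0) //; apply: val_inj.
- by rewrite (_ : Ordinal lt_m3 = i1) //; apply: val_inj.
- by rewrite (_ : Ordinal lt_m3 = i2) //; apply: val_inj.
Qed.

Section ManinIX.
Variable R : realType.
Implicit Types (f g h ft : sc R) (A B C : 'M[R]_3) (u v w : 'cV[R]_3).

Lemma sum_mx1_l (F : 'I_3 -> R) i : \sum_(a < 3) (1%:M : 'M[R]_3) i a * F a = F i.
Proof. by rewrite sum3E !mxE; elim/ord3_ind: i => /=; ring. Qed.

Lemma sum_mx1_r (F : 'I_3 -> R) i : \sum_(a < 3) (1%:M : 'M[R]_3) a i * F a = F i.
Proof. by rewrite sum3E !mxE; elim/ord3_ind: i => /=; ring. Qed.

Lemma sc_ext f g : (forall i j k, f i j k = g i j k) -> f = g.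
Proof.
move=> fg; apply: functional_extensionality => i.
by apply: functional_extensionality => j; apply: functional_extensionality => k.
Qed.

Definition lie_hom A g f : Prop :=
  forall i j c, \sum_(a < 3) \sum_(b < 3) A a i * A b j * f a b c
              = \sum_(k < 3) g i j k * A c k.

Lemma lie_iso_hom f g : lie_iso f g -> exists2 P, P \in unitmx & lie_hom P f g.
Proof.
by case=> P [uP hP]; exists P => // i j c; rewrite hP.
Qed.

Section TransCoef.
Variables (A : 'M[R]_3) (f ft : sc R).
Hypothesis uA : A \in unitmx.

Lemma sum_mx_trans_f a i j :
  \sum_(k < 3) A a k * trans_f f A i j k
  = \sum_(p < 3) \sum_(q < 3) A p i * A q j * f p q a.
Proof.
transitivity (\sum_(r < 3) (A *m invmx A) a r *
  \sum_(p < 3) \sum_(q < 3) A p i * A q j * f p q r).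
  by rewrite /trans_f !sum3E !mxE !sum3E; ring.
by rewrite mulmxV // sum_mx1_l.
Qed.

Lemma sum_invmx_trans_f b i j :
  \sum_(k < 3) invmx A k b * trans_f f A k i j
  = \sum_(q < 3) \sum_(r < 3) A q i * f b q r * invmx A j r.
Proof.
transitivity (\sum_(p < 3) (A *m invmx A) p b *
  \sum_(q < 3) \sum_(r < 3) A q i * f p q r * invmx A j r).
  by rewrite /trans_f !sum3E !mxE !sum3E; ring.
by rewrite mulmxV // sum_mx1_r.
Qed.

Lemma sum_mx_trans_ft a i j :
  \sum_(k < 3) A a k * trans_ft ft A j k i
  = \sum_(p < 3) \sum_(s < 3) invmx A j p * ft p a s * A s i.
Proof.
transitivity (\sum_(q < 3) (A *m invmx A) a q *
  \sum_(p < 3) \sum_(s < 3) invmx A j p * ft p q s * A s i).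
  by rewrite /trans_ft !sum3E !mxE !sum3E; ring.
by rewrite mulmxV // sum_mx1_l.
Qed.

Lemma sum_invmx_trans_ft b i j :
  \sum_(k < 3) invmx A k b * trans_ft ft A i j k
  = \sum_(p < 3) \sum_(q < 3) invmx A i p * invmx A j q * ft p q b.
Proof.
transitivity (\sum_(c < 3) (A *m invmx A) c b *
  \sum_(p < 3) \sum_(q < 3) invmx A i p * invmx A j q * ft p q c).
  by rewrite /trans_ft !sum3E !mxE !sum3E; ring.
by rewrite mulmxV // sum_mx1_r.
Qed.

Lemma lie_hom_trans_f : lie_hom A (trans_f f A) f.
Proof.
move=> i j c; rewrite -sum_mx_trans_f.
by apply: eq_bigr => k _; rewrite mulrC.
Qed.

End TransCoef.

Lemma trans_f_lie_hom A g f : A \in unitmx -> lie_hom A g f -> trans_f f A = g.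
Proof.
move=> uA hA; apply: sc_ext => i j k.
transitivity (\sum_(c < 3) (\sum_(a < 3) \sum_(b < 3) A a i * A b j * f a b c)
                * invmx A k c).
  by rewrite /trans_f !sum3E; ring.
under eq_bigr do rewrite hA.
transitivity (\sum_(m < 3) (invmx A *m A) k m * g i j m).
  by rewrite !sum3E !mxE !sum3E; ring.
by rewrite mulVmx // sum_mx1_l.
Qed.

Lemma lie_hom_invmx A g f : A \in unitmx -> lie_hom A g f -> lie_hom (invmx A) f g.
Proof.
move=> uA hA; rewrite -(trans_f_lie_hom uA hA) => i j r.
transitivity (\sum_(a < 3) (A *m invmx A) a i * \sum_(b < 3) (A *m invmx A) b j *
   \sum_(c < 3) f a b c * invmx A r c).
  by rewrite /trans_f !sum3E !mxE !sum3E; ring.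
rewrite mulmxV //; under eq_bigr do rewrite sum_mx1_r.
by rewrite sum_mx1_r.
Qed.

Lemma lie_hom_mulmx A B h g f : lie_hom A g f -> lie_hom B h g -> lie_hom (A *m B) h f.
Proof.
move=> hA hB i j c.
transitivity (\sum_(p < 3) \sum_(q < 3) B p i * B q j *
   \sum_(a < 3) \sum_(b < 3) A a p * A b q * f a b c).
  by rewrite !sum3E !mxE !sum3E; ring.
under eq_bigr do under eq_bigr do rewrite hA.
transitivity (\sum_(k < 3) A c k * \sum_(p < 3) \sum_(q < 3) B p i * B q j * g p q k).
  by rewrite !sum3E; ring.
under eq_bigr do rewrite hB.
by rewrite [RHS]sum3E !mxE !sum3E; ring.
Qed.

(* Coordinates in (X_i, X~^i) of the vector with coordinates x in the basis
   (X_k A^k_i, (A^-1)^i_k X~^k) of the transformed triple. *)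
Definition Dmap A (x : Dv R) : Dv R :=
  (fun a => \sum_(i < 3) A a i * x.1 i, fun b => \sum_(j < 3) invmx A j b * x.2 j).

Lemma Dmap_Dbr A f ft x y : A \in unitmx ->
  Dmap A (Dbr (trans_f f A) (trans_ft ft A) x y) = Dbr f ft (Dmap A x) (Dmap A y).
Proof.
move=> uA; congr pair; apply: functional_extensionality => a /=.
- transitivity (\sum_(i < 3) \sum_(j < 3)
    (x.1 i * y.1 j * (\sum_(k < 3) A a k * trans_f f A i j k)
     + (x.1 i * y.2 j - x.2 j * y.1 i) * (\sum_(k < 3) A a k * trans_ft ft A j k i))).
    by rewrite /Dbr /= !sum3E; ring.
  under [LHS]eq_bigr => i _ do under eq_bigr => j _ do rewrite (sum_mx_trans_f f uA) (sum_mx_trans_ft ft uA).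
  by rewrite /Dbr /Dmap /= !sum3E; ring.
- transitivity (\sum_(i < 3) \sum_(j < 3)
    (x.2 i * y.2 j * (\sum_(k < 3) invmx A k a * trans_ft ft A i j k)
     + (x.1 i * y.2 j - x.2 j * y.1 i) * (\sum_(k < 3) invmx A k a * trans_f f A k i j))).
    by rewrite /Dbr /= !sum3E; ring.
  under [LHS]eq_bigr => i _ do under eq_bigr => j _ do rewrite (sum_invmx_trans_ft ft uA) (sum_invmx_trans_f f uA).
  by rewrite /Dbr /Dmap /= !sum3E; ring.
Qed.

Lemma DmapK1 A (z : Dv R) k : A \in unitmx ->
  z.1 k = \sum_(a < 3) invmx A k a * (Dmap A z).1 a.
Proof.
move=> uA; transitivity (\sum_(i < 3) (invmx A *m A) k i * z.1 i).
  by rewrite mulVmx // sum_mx1_l.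
by rewrite /Dmap /= !sum3E !mxE !sum3E; ring.
Qed.

Lemma DmapK2 A (z : Dv R) k : A \in unitmx ->
  z.2 k = \sum_(b < 3) A b k * (Dmap A z).2 b.
Proof.
move=> uA; transitivity (\sum_(j < 3) (invmx A *m A) j k * z.2 j).
  by rewrite mulVmx // sum_mx1_r.
by rewrite /Dmap /= !sum3E !mxE !sum3E; ring.
Qed.

Lemma weighted_sum3_eq0 (I : finType) (c F G H : I -> R) :
  (forall a, F a + G a + H a = 0) ->
  \sum_a c a * F a + \sum_a c a * G a + \sum_a c a * H a = 0.
Proof. by move=> FGH; rewrite -!big_split big1 // => a _ /=; rewrite -!mulrDr FGH mulr0. Qed.

Lemma manin_triple_trans A f ft : A \in unitmx ->
  manin_triple f ft -> manin_triple (trans_f f A) (trans_ft ft A).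
Proof.
move=> uA [anti jacobi]; have DbrE := fun x y => Dmap_Dbr f ft x y uA.
split=> [x y k | x y z k]; split.
- rewrite (DmapK1 (Dbr _ _ x y) k uA) (DmapK1 (Dbr _ _ y x) k uA) !DbrE -sumrN.
  by apply: eq_bigr => a _; rewrite (proj1 (anti _ _ a)) mulrN.
- rewrite (DmapK2 (Dbr _ _ x y) k uA) (DmapK2 (Dbr _ _ y x) k uA) !DbrE -sumrN.
  by apply: eq_bigr => a _; rewrite (proj2 (anti _ _ a)) mulrN.
- rewrite (DmapK1 (Dbr _ _ x _) k uA) (DmapK1 (Dbr _ _ y _) k uA).
  rewrite (DmapK1 (Dbr _ _ z _) k uA) !DbrE.
  by apply: weighted_sum3_eq0 => a; exact: (proj1 (jacobi _ _ _ a)).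
- rewrite (DmapK2 (Dbr _ _ x _) k uA) (DmapK2 (Dbr _ _ y _) k uA).
  rewrite (DmapK2 (Dbr _ _ z _) k uA) !DbrE.
  by apply: weighted_sum3_eq0 => a; exact: (proj2 (jacobi _ _ _ a)).
Qed.

Definition eX (a : 'I_3) : Dv R := (fun k => (k == a)%:R, fun=> 0).
Definition eXt (a : 'I_3) : Dv R := (fun=> 0, fun k => (k == a)%:R).

Section DbrBasis.
Variables (f ft : sc R).

Lemma Dbr_eX_1 a z k :
  (Dbr f ft (eX a) z).1 k = \sum_(j < 3) z.1 j * f a j k + \sum_(j < 3) z.2 j * ft j k a.
Proof. by rewrite /Dbr /= !sum3E; elim/ord3_ind: a => /=; ring. Qed.

Lemma Dbr_eXt_1 c z k : (Dbr f ft (eXt c) z).1 k = - \sum_(i < 3) z.1 i * ft c k i.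
Proof. by rewrite /Dbr /= !sum3E; elim/ord3_ind: c => /=; ring. Qed.

Lemma Dbr_eX_eXt b c : Dbr f ft (eX b) (eXt c) = (fun j => ft c j b, fun j => f j b c).
Proof.
rewrite /Dbr; congr pair; apply: functional_extensionality => k; rewrite !sum3E;
by elim/ord3_ind: b => /=; elim/ord3_ind: c => /=; ring.
Qed.

Lemma Dbr_eXt_eX c a : Dbr f ft (eXt c) (eX a) = (fun j => - ft c j a, fun j => - f j a c).
Proof.
rewrite /Dbr; congr pair; apply: functional_extensionality => k; rewrite !sum3E;
by elim/ord3_ind: a => /=; elim/ord3_ind: c => /=; ring.
Qed.

Lemma Dbr_eX_eX a b : Dbr f ft (eX a) (eX b) = (fun j => f a b j, fun=> 0).
Proof.
rewrite /Dbr; congr pair; apply: functional_extensionality => k; rewrite !sum3E;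
by elim/ord3_ind: a => /=; elim/ord3_ind: b => /=; ring.
Qed.

Lemma Dbr_eXt_eXt_2 a b k : (Dbr f ft (eXt a) (eXt b)).2 k = ft a b k.
Proof. by rewrite /Dbr /= !sum3E; elim/ord3_ind: a => /=; elim/ord3_ind: b => /=; ring. Qed.

Hypothesis mt : manin_triple f ft.

Lemma manin_triple_dual_anti a b k : ft a b k = - ft b a k.
Proof. by rewrite -!Dbr_eXt_eXt_2; exact: (proj2 (mt.1 _ _ k)). Qed.

Lemma manin_triple_mixed_jacobi a b c k :
  \sum_(j < 3) ft c j b * f a j k + \sum_(j < 3) f j b c * ft j k a
  - \sum_(j < 3) ft c j a * f b j k - \sum_(j < 3) f j a c * ft j k b
  - \sum_(i < 3) f a b i * ft c k i = 0.
Proof.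
have := proj1 (mt.2 (eX a) (eX b) (eXt c) k).
rewrite Dbr_eX_eXt Dbr_eXt_eX Dbr_eX_eX !Dbr_eX_1 Dbr_eXt_1 /= !sum3E => <-; ring.
Qed.

End DbrBasis.

Definition ft_vec (v : 'cV[R]_3) : sc R :=
  fun i j k => v j 0 * (i == k)%:R - v i 0 * (j == k)%:R.

Definition trace_vec ft : 'cV[R]_3 := \col_j \sum_(i < 3) ft i j i.

Lemma trace_ft_vec v : trace_vec (ft_vec v) = 2%:R *: v.
Proof.
apply/matrixP => j c; rewrite (ord1 c) !mxE sum3E /ft_vec.
by elim/ord3_ind: j => /=; ring.
Qed.

Lemma ft_vec0 : ft_vec 0 = ft_I R.
Proof. by apply: sc_ext => i j k; rewrite /ft_vec /ft_I !mxE; ring. Qed.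

Lemma ft_vec_e0 b : ft_vec (b *: delta_mx i0 0) = ft_V b.
Proof.
apply: sc_ext => i j k; rewrite /ft_vec /ft_V !mxE.
by elim/ord3_ind: i => /=; elim/ord3_ind: j => /=; elim/ord3_ind: k => /=; ring.
Qed.

Lemma IX_dual_ft_vec ft : manin_triple (f_IX R) ft -> ft = ft_vec (2^-1 *: trace_vec ft).
Proof.
move=> mt; have anti := manin_triple_dual_anti mt.
have jac := manin_triple_mixed_jacobi mt.
(* Antisymmetry reduces every entry to one of ft 0 1 _, ft 1 2 _, ft 2 0 _;
   six mixed Jacobi identities then relate these nine entries. *)
have d i k : ft i i k = 0 by have := anti i i k; lra.
have s10 k : ft i1 i0 k = - ft i0 i1 k by exact: anti.
have s21 k : ft i2 i1 k = - ft i1 i2 k by exact: anti.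
have s02 k : ft i0 i2 k = - ft i2 i0 k by exact: anti.
have ft012 : ft i0 i1 i2 = 0.
  move: (jac i0 i2 i0 i2) (jac i1 i2 i1 i2).
  by rewrite !sum3E /f_IX /= ?d ?s10 ?s21 ?s02; lra.
have ft120 : ft i1 i2 i0 = 0.
  move: (jac i0 i1 i0 i1) (jac i0 i2 i0 i2).
  by rewrite !sum3E /f_IX /= ?d ?s10 ?s21 ?s02; lra.
have ft201 : ft i2 i0 i1 = 0.
  move: (jac i0 i1 i0 i1) (jac i1 i2 i1 i2).
  by rewrite !sum3E /f_IX /= ?d ?s10 ?s21 ?s02; lra.
have ft010 : ft i0 i1 i0 = - ft i1 i2 i2.
  by move: (jac i0 i1 i1 i2); rewrite !sum3E /f_IX /= ?d ?s10 ?s21 ?s02; lra.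
have ft011 : ft i0 i1 i1 = - ft i2 i0 i2.
  by move: (jac i0 i1 i0 i2); rewrite !sum3E /f_IX /= ?d ?s10 ?s21 ?s02; lra.
have ft121 : ft i1 i2 i1 = - ft i2 i0 i0.
  by move: (jac i0 i2 i1 i2); rewrite !sum3E /f_IX /= ?d ?s10 ?s21 ?s02; lra.
apply: sc_ext => i j k; rewrite /ft_vec /trace_vec !mxE !sum3E.
elim/ord3_ind: i => /=; elim/ord3_ind: j => /=; elim/ord3_ind: k => /=;
  rewrite ?d ?s10 ?s21 ?s02 ?ft012 ?ft120 ?ft201 ?ft010 ?ft011 ?ft121; lra.
Qed.

Lemma trace_vec_trans_ft A ft : A \in unitmx ->
  trace_vec ft = A *m trace_vec (trans_ft ft A).
Proof.
move=> uA; apply/matrixP => j z; rewrite (ord1 z).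
transitivity (\sum_(b < 3) (A *m invmx A) j b *
  \sum_(c < 3) \sum_(a < 3) (A *m invmx A) c a * ft a b c).
  rewrite mulmxV // mxE.
  under [RHS]eq_bigr => b _ do under eq_bigr => c _ do rewrite sum_mx1_l.
  by rewrite sum_mx1_l.
by rewrite /trans_ft !mxE !sum3E !mxE !sum3E; ring.
Qed.

Definition dot u v : R := (u^T *m v) 0 0.

Definition cross u v : 'cV[R]_3 :=
  \col_k \sum_(i < 3) \sum_(j < 3) u i 0 * v j 0 * f_IX R i j k.

Lemma dotE u v : dot u v = u i0 0 * v i0 0 + u i1 0 * v i1 0 + u i2 0 * v i2 0.
Proof. by rewrite /dot mxE sum3E !mxE. Qed.

Lemma dotC u v : dot u v = dot v u.
Proof. by rewrite !dotE; ring. Qed.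

Lemma dot_ge0 u : 0 <= dot u u.
Proof. by rewrite dotE -!expr2 !addr_ge0 // sqr_ge0. Qed.

Lemma dot_eq0 u : dot u u = 0 -> u = 0.
Proof.
rewrite dotE -!expr2 => u0.
have u_0 : u i0 0 = 0 by apply/eqP; rewrite -sqrf_eq0; nra.
have u_1 : u i1 0 = 0 by apply/eqP; rewrite -sqrf_eq0; nra.
have u_2 : u i2 0 = 0 by apply/eqP; rewrite -sqrf_eq0; nra.
by apply/matrixP => i z; rewrite (ord1 z) mxE; elim/ord3_ind: i.
Qed.

Lemma dot_crossl u v : dot (cross u v) u = 0.
Proof. by rewrite dotE !mxE !sum3E /f_IX /=; ring. Qed.

Lemma dot_crossr u v : dot (cross u v) v = 0.
Proof. by rewrite dotE !mxE !sum3E /f_IX /=; ring. Qed.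

Lemma dot_cross u v : dot (cross u v) (cross u v) = dot u u * dot v v - dot u v ^+ 2.
Proof. by rewrite !dotE !mxE !sum3E /f_IX /=; ring. Qed.

Lemma dot_orthogonal C u : C^T *m C = 1%:M -> dot (C *m u) (C *m u) = dot u u.
Proof. by move=> CC; rewrite /dot trmx_mul -mulmxA (mulmxA C^T) CC mul1mx. Qed.

Lemma cross_cycle_orthonormal u v w :
  cross u v = w -> cross v w = u -> cross w u = v -> 0 < dot u u ->
  [/\ dot u u = 1, dot v v = 1 & dot w w = 1] /\ [/\ dot u v = 0, dot v w = 0 & dot w u = 0].
Proof.
move=> uvw vwu wuv u_gt0.
have uv : dot u v = 0 by rewrite -wuv dotC dot_crossr.
have vw : dot v w = 0 by rewrite -uvw dotC dot_crossr.
have wu : dot w u = 0 by rewrite -uvw dot_crossl.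
have nw : dot w w = dot u u * dot v v by rewrite -uvw dot_cross uv expr0n subr0.
have nu : dot u u = dot v v * dot w w by rewrite -{1 2}vwu dot_cross vw expr0n subr0.
have nv : dot v v = dot w w * dot u u by rewrite -{1 2}wuv dot_cross wu expr0n subr0.
have := dot_ge0 v; have := dot_ge0 w => w_ge0 v_ge0.
by split; split=> //; nra.
Qed.

Lemma unitmx_dot_col_gt0 C j : C \in unitmx -> 0 < dot (col j C) (col j C).
Proof.
move=> uC; rewrite lt_neqAle dot_ge0 andbT eq_sym; apply/eqP => /dot_eq0 Cj0.
have := congr1 (fun M : 'M[R]_3 => M j j) (mulVmx uC).
rewrite !mxE eqxx big1 => [/eqP|k _]; first by rewrite eq_sym oner_eq0.
by have := congr1 (fun v : 'cV[R]_3 => v k 0) Cj0; rewrite !mxE => ->; rewrite mulr0.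
Qed.

Lemma IX_aut_orthogonal C : C \in unitmx -> lie_hom C (f_IX R) (f_IX R) -> C^T *m C = 1%:M.
Proof.
move=> uC hC.
have crossC i j : cross (col i C) (col j C) = \col_c \sum_(k < 3) f_IX R i j k * C c k.
  apply/matrixP => c z; rewrite !mxE -hC.
  by apply: eq_bigr => a _; apply: eq_bigr => b _; rewrite !mxE.
have colE c : col c C = \col_r C r c by apply/matrixP => r z; rewrite !mxE.
have c01 : cross (col i0 C) (col i1 C) = col i2 C.
  by rewrite crossC colE; apply/matrixP => r z; rewrite !mxE sum3E /f_IX /=; ring.
have c12 : cross (col i1 C) (col i2 C) = col i0 C.
  by rewrite crossC colE; apply/matrixP => r z; rewrite !mxE sum3E /f_IX /=; ring.
have c20 : cross (col i2 C) (col i0 C) = col i1 C.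
  by rewrite crossC colE; apply/matrixP => r z; rewrite !mxE sum3E /f_IX /=; ring.
have [[n0 n1 n2] [d01 d12 d20]] :=
  cross_cycle_orthonormal c01 c12 c20 (unitmx_dot_col_gt0 i0 uC).
apply/matrixP => i j.
have -> : (C^T *m C) i j = dot (col i C) (col j C).
  by rewrite /dot !mxE; apply: eq_bigr => k _; rewrite !mxE.
rewrite !mxE; elim/ord3_ind: i; elim/ord3_ind: j => //=; by rewrite dotC.
Qed.

(* The rotation of R^3 induced by conjugation by the quaternion a + b i + c j + d k. *)
Definition quat_rot (a b c d : R) : 'M[R]_3 := \matrix_(i, j)
  (match nat_of_ord i, nat_of_ord j with
   | 0, 0 => a^+2 + b^+2 - c^+2 - d^+2
   | 0, 1 => 2 * (b * c - a * d)
   | 0, _ => 2 * (b * d + a * c)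
   | 1, 0 => 2 * (b * c + a * d)
   | 1, 1 => a^+2 - b^+2 + c^+2 - d^+2
   | 1, _ => 2 * (c * d - a * b)
   | _, 0 => 2 * (b * d - a * c)
   | _, 1 => 2 * (c * d + a * b)
   | _, _ => a^+2 - b^+2 - c^+2 + d^+2
   end / (a^+2 + b^+2 + c^+2 + d^+2)).

Section QuatRot.
Variables a b c d : R.
Hypothesis N_neq0 : a^+2 + b^+2 + c^+2 + d^+2 != 0.

Lemma quat_rot_lie_hom : lie_hom (quat_rot a b c d) (f_IX R) (f_IX R).
Proof.
move=> i j k; rewrite !sum3E !mxE /f_IX.
by elim/ord3_ind: i => /=; elim/ord3_ind: j => /=; elim/ord3_ind: k => /=; field.
Qed.

Lemma quat_rot_unitmx : quat_rot a b c d \in unitmx.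
Proof.
have Q_QT : quat_rot a b c d *m (quat_rot a b c d)^T = 1%:M.
  apply/matrixP => i j; rewrite !mxE sum3E !mxE.
  by elim/ord3_ind: i => /=; elim/ord3_ind: j => /=; field.
by case: (mulmx1_unit Q_QT).
Qed.

End QuatRot.

Lemma exists_IX_aut_e0 v s : 0 < s -> dot v v = s ^+ 2 ->
  exists2 Q, Q \in unitmx /\ lie_hom Q (f_IX R) (f_IX R) & Q *m (s *: delta_mx i0 0) = v.
Proof.
rewrite dotE => s_gt0 hs; have s_neq0 := lt0r_neq0 s_gt0.
have QsE Q : Q *m (s *: delta_mx i0 0) = \col_r (Q r i0 * s).
  by apply/matrixP => r z; rewrite (ord1 z) !mxE sum3E !mxE /=; ring.
(* The quaternion (s + v_0) - v_2 j + v_1 k maps e_0 to v / s; it vanishes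
   when v = - s e_0, where the half-turn j about e_1 does the job. *)
have [w0|w_neq0] := eqVneq (s + v i0 0) 0.
  have v0 : v i0 0 = - s by lra.
  have v1 : v i1 0 = 0 by nra.
  have v2 : v i2 0 = 0 by nra.
  have N_neq0 : (0 : R) ^+ 2 + 0 ^+ 2 + 1 ^+ 2 + 0 ^+ 2 != 0.
    by rewrite expr0n expr1n /= add0r add0r addr0 oner_neq0.
  exists (quat_rot 0 0 1 0); first by split; [apply: quat_rot_unitmx | apply: quat_rot_lie_hom].
  rewrite QsE; apply/matrixP => r z; rewrite (ord1 z) !mxE.
  by elim/ord3_ind: r => /=; rewrite ?v0 ?v1 ?v2; field.
set w := s + v i0 0 in w_neq0.
have N_eq : w ^+ 2 + 0 ^+ 2 + (- v i2 0) ^+ 2 + v i1 0 ^+ 2 = 2 * s * w by rewrite /w; lra.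
have N_neq0 : w ^+ 2 + 0 ^+ 2 + (- v i2 0) ^+ 2 + v i1 0 ^+ 2 != 0.
  by rewrite N_eq !mulf_neq0 // pnatr_eq0.
have ww : w ^+ 2 + 0 ^+ 2 - (- v i2 0) ^+ 2 - v i1 0 ^+ 2 = 2 * w * v i0 0 by rewrite /w; lra.
exists (quat_rot w 0 (- v i2 0) (v i1 0)).
  by split; [apply: quat_rot_unitmx | apply: quat_rot_lie_hom].
rewrite QsE; apply/matrixP => r z; rewrite (ord1 z) !mxE N_eq.
elim/ord3_ind: r => /=; by rewrite ?ww; field; rewrite w_neq0 s_neq0.
Qed.

Lemma IX_normal_form_eq g1 g2 : IX_normal_form g1 -> IX_normal_form g2 ->
  dot (trace_vec g1) (trace_vec g1) = dot (trace_vec g2) (trace_vec g2) -> g1 = g2.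
Proof.
have dotI : dot (trace_vec (ft_I R)) (trace_vec (ft_I R)) = 0.
  by rewrite -ft_vec0 trace_ft_vec scaler0 dotE !mxE; ring.
have dotV (b : R) : dot (trace_vec (ft_V b)) (trace_vec (ft_V b)) = 4%:R * b ^+ 2.
  by rewrite -ft_vec_e0 trace_ft_vec dotE !mxE /=; ring.
case=> [->|[b1 [b1_gt0 ->]]] [->|[b2 [b2_gt0 ->]]]; rewrite ?dotI ?dotV // => eq_b.
- by exfalso; nra.
- by exfalso; nra.
- by congr ft_V; nra.
Qed.

Section AdaptedBases.
Variables (f ft : sc R).

Lemma IX_normal_form_unique A1 A2 : A1 \in unitmx -> A2 \in unitmx ->
  lie_hom A1 (f_IX R) f -> lie_hom A2 (f_IX R) f ->
  IX_normal_form (trans_ft ft A1) -> IX_normal_form (trans_ft ft A2) ->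
  trans_ft ft A1 = trans_ft ft A2.
Proof.
move=> u1 u2 h1 h2 n1 n2; apply: IX_normal_form_eq => //.
set C := invmx A1 *m A2.
have CC : C^T *m C = 1%:M.
  apply: IX_aut_orthogonal; first by rewrite unitmx_mul unitmx_inv u1 u2.
  exact: lie_hom_mulmx (lie_hom_invmx u1 h1) h2.
have -> : trace_vec (trans_ft ft A1) = C *m trace_vec (trans_ft ft A2).
  by rewrite /C -mulmxA -trace_vec_trans_ft // (trace_vec_trans_ft ft u1) mulKmx.
by rewrite dot_orthogonal.
Qed.

Hypothesis mt : manin_triple f ft.

Lemma adapted_trans_ft A : A \in unitmx -> lie_hom A (f_IX R) f ->
  trans_ft ft A = ft_vec (2^-1 *: trace_vec (trans_ft ft A)).
Proof.
move=> uA hA; apply: IX_dual_ft_vec.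
by rewrite -(trans_f_lie_hom uA hA); exact: manin_triple_trans.
Qed.

Lemma exists_IX_normal_form A0 : A0 \in unitmx -> lie_hom A0 (f_IX R) f ->
  exists A, [/\ A \in unitmx, lie_hom A (f_IX R) f & IX_normal_form (trans_ft ft A)].
Proof.
move=> u0 h0; set t0 := trace_vec (trans_ft ft A0).
have [t0_eq0|t0_neq0] := eqVneq (dot t0 t0) 0.
  exists A0; split=> //; left.
  by rewrite (adapted_trans_ft u0 h0) -/t0 (dot_eq0 t0_eq0) scaler0 ft_vec0.
set s := Num.sqrt (dot t0 t0).
have s_gt0 : 0 < s by rewrite sqrtr_gt0 lt_neqAle eq_sym t0_neq0 dot_ge0.
have [Q [uQ hQ] Qe0] := exists_IX_aut_e0 s_gt0 (esym (sqr_sqrtr (dot_ge0 t0))).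
set A := A0 *m Q.
have uA : A \in unitmx by rewrite unitmx_mul u0 uQ.
have hA : lie_hom A (f_IX R) f := lie_hom_mulmx h0 hQ.
have tA : trace_vec (trans_ft ft A) = s *: delta_mx i0 0.
  have := trace_vec_trans_ft ft uA.
  by rewrite (trace_vec_trans_ft ft u0) -/t0 -Qe0 mulmxA => /(can_inj (mulKmx uA)).
exists A; split=> //; right; exists (s / 2%:R); split; first by rewrite divr_gt0.
by rewrite (adapted_trans_ft uA hA) -ft_vec_e0 tA scalerA mulrC.
Qed.

End AdaptedBases.
End ManinIX.

Theorem mainTheorem1 (R : realType) (f' ft' : sc R) :
  manin_triple f' ft' -> lie_iso f' (f_IX R) ->
  exists! gt : sc R, IX_normal_form gt /\ manin_iso f' ft' (f_IX R) gt.
Proof.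
move=> mt /lie_iso_hom[P uP hP].
have uP' : invmx P \in unitmx by rewrite unitmx_inv.
have [A [uA hA nfA]] := exists_IX_normal_form mt uP' (lie_hom_invmx uP hP).
exists (trans_ft ft' A); split.
  split=> //; exists A; split=> //; split=> //.
  exact/esym/(trans_f_lie_hom uA hA).
move=> gt [nf [A' [uA' [fE ftE]]]].
have hA' : lie_hom A' (f_IX R) f' by rewrite fE; exact: lie_hom_trans_f.
by rewrite ftE; apply: (IX_normal_form_unique uA uA' hA hA' nfA); rewrite -ftE.
Qed.
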